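(* Let $\mathcal C$ be a depth-$\Delta$ Clifford circuit on $n$ qubits with linear outcome code $\mathcal O(\mathcal C)$. The group of all operators in $\overline{\mathcal P}_{n(\Delta+1)}$ that commute with every $\overleftarrow{F(u)}$, $u\in\mathcal O(\mathcal C)^\perp$ (the stabilizers and logical operators of the spacetime code), is generated by: (i) the operators $\eta_{\Delta+0.5}(P)$, $P$ ranging over a basis of $\overline{\mathcal P}_n$; (ii) for each $\ell=1,\dots,\Delta$, the operators $G(P,\ell)$, $P$ ranging over a basis of the space of Pauli operators in $\overline{\mathcal P}_n$ commuting with all operators measured at level $\ell$; (iii) the operators $L(v)$, $v$ ranging over a basis of $\mathcal O(\mathcal C)$.
   Context: A Clifford circuit on $n$ qubits is a finite sequence of operations, each a unitary Clifford gate or the measurement of a Hermitian $n$-qubit Pauli, each with a level in $\{1,2,\dots\}$; operations of equal level have disjoint supports and levels are nondecreasing; depth $\Delta$ = maximal level. In circuit order the $j$-th measurement measures $S_j$ at level $\ell_j$ ($j=1,\dots,m$); outcome $o_j=0$ for eigenvalue $+1$, $1$ for $-1$. The outcome code $\mathcal O(\mathcal C)\subseteq\mathbb Z_2^m$ is the set of outcome bit-strings occurring with nonzero probability for some input state; $\perp$ refers to $(u|v)=\sum u_iv_i\bmod2$. $\overline{\mathcal P}_N$ is the $N$-qubit Pauli group modulo phases. $U_\ell$ is the product of the unitary gates of level $\ell$ (identity if none). Fault operators $F\in\overline{\mathcal P}_{n(\Delta+1)}$ act on qubits $(\ell+0.5,q)$, $0\le\ell\le\Delta$, $1\le q\le n$,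 with level components $F_{\ell+0.5}$; $\eta_{\ell+0.5}(P)$ is $P$ at level $\ell+0.5$ and $I$ elsewhere. Back-cumulant $\overleftarrow F$: start with $F$; for $\ell=\Delta,\dots,1$ replace $\overleftarrow F_{\ell-0.5}$ by $\overleftarrow F_{\ell-0.5}\cdot U_\ell^{-1}\overleftarrow F_{\ell+0.5}U_\ell$. $F(u)=\prod_j\eta_{\ell_j-0.5}(S_j^{u_j})$. For $1\le\ell\le\Delta$ and $P\in\overline{\mathcal P}_n$, $G(P,\ell)=\eta_{\ell-0.5}(P)\,\eta_{\ell+0.5}(U_\ell PU_\ell^{-1})$. For each $j$, fix a Pauli operator $P_j\in\overline{\mathcal P}_n$ supported within the support of $S_j$ and anticommuting with $S_j$; for $v\in\mathbb Z_2^m$, $L(v)=\prod_{j=1}^m G(P_j,\ell_j)^{v_j}$. *)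

From HB Require Import structures.
From mathcomp Require Import all_boot all_order all_algebra.
From mathcomp Require Import algC.
Set Implicit Arguments. Unset Strict Implicit. Unset Printing Implicit Defensive.
Import Order.TTheory GRing.Theory Num.Theory.
Local Open Scope ring_scope.

(* Pauli operators modulo phases on n qubits: vectors (x | z) in F_2^(n+n).  *)
(* The group law of Pbar_n is vector addition.                              *)
Definition pauli (n : nat) := 'rV['F_2]_(n + n).

Definition xbit n (p : pauli n) (j : 'I_n) : bool := p 0 (lshift n j) != 0.
Definition zbit n (p : pauli n) (j : 'I_n) : bool := p 0 (rshift n j) != 0.

Definition psupp n (p : pauli n) : {set 'I_n} := [set j | xbit p j || zbit p j].

(* symplectic form: 0 iff (any representatives of) p and q commute *)
Definition symp n (p q : pauli n) : 'F_2 :=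
  \sum_(j < n) (p 0 (lshift n j) * q 0 (rshift n j) + p 0 (rshift n j) * q 0 (lshift n j)).

Definition kbit (k : nat) (j : nat) : bool := odd (k %/ 2 ^ j).

(* Hermitian representative  i^(x.z) X^x Z^z  of the Pauli class p *)
Definition pmx n (p : pauli n) : 'M[algC]_(2 ^ n) :=
  \matrix_(r, c)
    (if [forall j : 'I_n, kbit r j == (kbit c j (+) xbit p j)]
     then 'i ^+ #|[set j : 'I_n | xbit p j && zbit p j]|
          * (-1) ^+ #|[set j : 'I_n | zbit p j && kbit c j]|
     else 0).

Definition sgnC (b : bool) : algC := if b then -1 else 1.

(* M is a scalar multiple of the Pauli matrix Q (Q is an involution) *)
Definition proportional n (M Q : 'M[algC]_(2 ^ n)) : bool :=
  M == (\tr (Q *m M) / (2 ^ n)%:R) *: Q.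

Definition conjP n (U : 'M[algC]_(2 ^ n)) (p : pauli n) : pauli n :=
  odflt 0 [pick q : pauli n | proportional (U *m pmx p *m invmx U) (pmx q)].

(* A gate carries a (declared) support A and its unitary matrix U; U must act *)
(* trivially outside A.  A measurement of the Hermitian Pauli                *)
(* (-1)^s * pmx p is written Meas s p.                                       *)
Inductive op (n : nat) :=
| Gate of {set 'I_n} & 'M[algC]_(2 ^ n)
| Meas of bool & pauli n.

(* a circuit: operations in circuit order, each with its level *)
Definition circuit (n : nat) := seq (nat * op n).

Definition op_supp n (o : op n) : {set 'I_n} :=
  match o with Gate A _ => A | Meas _ p => psupp p end.

Definition conjT n (U : 'M[algC]_(2 ^ n)) := (map_mx Num.conj U)^T.

Definition clifford_gate n (A : {set 'I_n}) (U : 'M[algC]_(2 ^ n)) : Prop :=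
  [/\ U *m conjT U = 1,
      (forall p : pauli n, exists q : pauli n,
           proportional (U *m pmx p *m invmx U) (pmx q)) &
      (forall p : pauli n, psupp p \subset ~: A -> U *m pmx p = pmx p *m U)].

Definition nth_op n (C : circuit n) (i : nat) : nat * op n :=
  nth (0%N, Meas false 0) C i.

Definition wf_circuit n (C : circuit n) : Prop :=
  [/\
      (forall i, (i < size C)%N -> (0 < (nth_op C i).1)%N),
      sorted leq (map fst C),
      (forall i j : nat, (i < j < size C)%N ->
         (nth_op C i).1 = (nth_op C j).1 ->
         [disjoint op_supp (nth_op C i).2 & op_supp (nth_op C j).2]) &
      (forall i A U, (i < size C)%N -> (nth_op C i).2 = Gate A U ->
         clifford_gate A U)].

Definition depth n (C : circuit n) : nat := \max_(o <- C) o.1.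

(* U_l : product of the unitary gates of level l (later gates on the left) *)
Definition Ulev n (C : circuit n) (l : nat) : 'M[algC]_(2 ^ n) :=
  foldl (fun M o => match o with
                    | (l', Gate _ U) => if l' == l then U *m M else M
                    | _ => M end) 1 C.

Definition meas_of n (C : circuit n) : seq (nat * bool * pauli n) :=
  pmap (fun o : nat * op n => match o.2 with
                              | Meas s p => Some (o.1, s, p)
                              | _ => None end) C.

Definition nmeas n (C : circuit n) : nat := size (meas_of C).

Definition mlev n (C : circuit n) (j : 'I_(nmeas C)) : nat :=
  (nth (0%N, false, 0) (meas_of C) j).1.1.
Definition msgn n (C : circuit n) (j : 'I_(nmeas C)) : bool :=
  (nth (0%N, false, 0) (meas_of C) j).1.2.
Definition mpauli n (C : circuit n) (j : 'I_(nmeas C)) : pauli n :=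
  (nth (0%N, false, 0) (meas_of C) j).2.

Definition proj n (b : bool) (p : pauli n) : 'M[algC]_(2 ^ n) :=
  2^-1 *: (1 + sgnC b *: pmx p).

(* Kraus operator of the circuit for the outcome bits o (j-th measurement
   gets o j); the operation performed first is rightmost. *)
Fixpoint kraus_aux n (ops : circuit n) (o : nat -> bool) (j : nat)
  : 'M[algC]_(2 ^ n) :=
  match ops with
  | [::] => 1
  | (_, Gate _ U) :: ops' => kraus_aux ops' o j *m U
  | (_, Meas s p) :: ops' => kraus_aux ops' o j.+1 *m proj (s (+) o j) p
  end.

Definition obit m (o : 'rV['F_2]_m) (j : nat) : bool :=
  match insub j with Some k => o 0 k != 0 | None => false end.

(* o occurs with nonzero probability for some (pure) input state psi *)
Definition outcome n (C : circuit n) (o : 'rV['F_2]_(nmeas C)) : Prop :=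
  exists psi : 'cV[algC]_(2 ^ n), kraus_aux C (obit o) 0 *m psi != 0.

Definition dotF2 m (u v : 'rV['F_2]_m) : 'F_2 := \sum_(j < m) u 0 j * v 0 j.

(* Spacetime operators: F : 'M_(Delta+1, n+n), row k = component at level   *)
(* k + 0.5.                                                                  *)
Definition stop n (C : circuit n) := 'M['F_2]_((depth C).+1, n + n).

Definition st_symp n (C : circuit n) (X Y : stop C) : 'F_2 :=
  \sum_(k < (depth C).+1) symp (row k X) (row k Y).

Definition etaST n (C : circuit n) (k : nat) (P : pauli n) : stop C :=
  \matrix_(i < (depth C).+1) (if (i == k :> nat) then P else 0).

Definition back_step n (C : circuit n) (l : nat) (F : stop C) : stop C :=
  \matrix_(k < (depth C).+1)
    (if (k == l.-1 :> nat)
     then row k F + conjP (invmx (Ulev C l)) (row (inord l) F)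
     else row k F).

Definition backcum n (C : circuit n) (F : stop C) : stop C :=
  foldl (fun G l => back_step l G) F (rev (iota 1 (depth C))).

Definition Fu n (C : circuit n) (u : 'rV['F_2]_(nmeas C)) : stop C :=
  \sum_(j < nmeas C) u 0 j *: etaST C (mlev j).-1 (mpauli j).

Definition Gop n (C : circuit n) (P : pauli n) (l : nat) : stop C :=
  etaST C l.-1 P + etaST C l (conjP (Ulev C l) P).

Definition Lop n (C : circuit n) (Pj : 'I_(nmeas C) -> pauli n)
  (v : 'rV['F_2]_(nmeas C)) : stop C :=
  \sum_(j < nmeas C) v 0 j *: Gop C (Pj j) (mlev j).

Definition comm_level n (C : circuit n) (l : nat) (P : pauli n) : Prop :=
  forall j : 'I_(nmeas C), mlev j = l -> symp P (mpauli j) = 0.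

(* Conjugation by a Clifford unitary preserves the symplectic form, so
   back-cumulation is adjoint to forward cumulation: writing a spacetime
   operator X as the sum of the G(fwdcum X l, l+1) and of
   eta_(Delta+0.5)(fwdcum X Delta), its pairing with the back-cumulant of
   F(u) becomes u . flips X, where bit j of flips X says whether the forward
   cumulant just before the j-th measurement anticommutes with S_j.  Hence X
   commutes with all these back-cumulants, u in O^perp, iff flips X lies in
   O^perp^perp = O.  As flips (L v) = v, the operator X + L (flips X) has
   forward cumulants commuting with the measurements of the next level, so the
   decomposition puts it in the span of the G(P, l) and eta(P); conversely
   every generator pairs to zero with these back-cumulants. *)

From HB Require Import structures.
From mathcomp Require Import all_boot all_order all_algebra.
From mathcomp Require Import algC zify ring.
Set Implicit Arguments. Unset Strict Implicit. Unset Printing Implicit Defensive.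
Import Order.TTheory GRing.Theory Num.Theory.
Local Open Scope ring_scope.

Section SpanInduction.
Variables (K : fieldType) (vT : vectType K).

Lemma span_ind (s : seq vT) (P : vT -> Prop) :
  P 0 -> (forall a x y, x \in s -> P y -> P (a *: x + y)) ->
  forall v, v \in <<s>>%VS -> P v.
Proof.
move=> P0 Pstep; elim: s Pstep => [|x s IHs] Pstep v.
  by rewrite span_nil memv0 => /eqP->.
rewrite span_cons => /memv_addP[_ /vlineP[a ->] [y ys ->]].
apply: (Pstep); first exact: mem_head.
by apply: IHs ys => a' x' y' x's; apply: (Pstep); rewrite in_cons x's orbT.
Qed.

Lemma memv_span_linear (wT : vectType K) (f : vT -> wT) (s : seq vT) (S : {vspace wT}) :
  linear f -> (forall x, x \in s -> f x \in S) -> forall v, v \in <<s>>%VS -> f v \in S.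
Proof.
move=> lin_f fsS; apply: span_ind => [|a x y xs fyS].
  by have := zmod_morphism_linear lin_f 0 0; rewrite !subrr => ->; apply: mem0v.
by rewrite (lin_f a x y); apply: memvD => //; apply/memvZ/fsS.
Qed.

End SpanInduction.

Lemma submx_perp_perp (F : fieldType) k m (B : 'M[F]_(k, m)) (c : 'rV[F]_m) :
  (forall v : 'cV[F]_m, B *m v = 0 -> c *m v = 0) -> (c <= B)%MS.
Proof.
move=> perpBc; rewrite submxE; apply/eqP/matrixP => i j.
have /perpBc : B *m col j (cokermx B) = 0 by rewrite colE mulmxA mulmx_coker mul0mx.
by rewrite colE mulmxA => /matrixP/(_ i 0); rewrite -colE !mxE.
Qed.

Lemma memv_perp_perp (F : fieldType) m (V : {vspace 'rV[F]_m}) (c : 'rV[F]_m) :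
  (forall u : 'rV[F]_m,
     (forall o, o \in V -> \sum_j u 0 j * o 0 j = 0) -> \sum_j u 0 j * c 0 j = 0) ->
  c \in V.
Proof.
move=> perpVc; set B := \matrix_(i < \dim V) (vbasis V)`_i.
have dotE (u o : 'rV[F]_m) : \sum_j u 0 j * o 0 j = (o *m u^T) 0 0.
  by rewrite !mxE; apply: eq_bigr => j _; rewrite mxE mulrC.
have /submxP[w ->] : (c <= B)%MS.
  apply: submx_perp_perp => v Bv0; apply/rowP => i; rewrite ord1 [RHS]mxE.
  rewrite -[v]trmxK -dotE perpVc // => o /coord_vbasis oE.
  have -> : o = \row_i coord (vbasis V) i o *m B.
    by rewrite {1}oE mulmx_sum_row; apply: eq_bigr => k _; rewrite mxE rowK.
  by rewrite dotE -mulmxA trmxK Bv0 mulmx0 mxE.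
rewrite mulmx_sum_row; apply: memv_suml => i _; apply: memvZ.
by rewrite rowK vbasis_mem ?mem_nth ?size_tuple.
Qed.

Lemma unitmx_neq0 (R : comUnitRingType) m (M : 'M[R]_m) :
  (0 < m)%N -> M \in unitmx -> M != 0.
Proof.
move=> m_gt0 Mu; apply/eqP => M0; move: (mulmxV Mu).
rewrite M0 mul0mx => /matrixP/(_ (Ordinal m_gt0) (Ordinal m_gt0)).
by rewrite !mxE eqxx => /eqP; rewrite eq_sym oner_eq0.
Qed.

Lemma scalemxI (R : idomainType) m k (M : 'M[R]_(m, k)) c d :
  M != 0 -> c *: M = d *: M -> c = d.
Proof.
move=> M_neq0 /eqP; rewrite -subr_eq0 -scalerBl scalemx_eq0 (negbTE M_neq0) orbF.
by rewrite subr_eq0 => /eqP.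
Qed.

Lemma nth_pmap_index T U (f : T -> option U) x0 y0 (s : seq T) j :
  (j < size (pmap f s))%N ->
  exists2 i, (i < size s)%N & f (nth x0 s i) = Some (nth y0 (pmap f s) j).
Proof.
elim: s j => [|x s IHs] j //=; case fx: (f x) => [y|] /=; last first.
  by move=> /IHs[i lt_i fiE]; exists i.+1.
case: j => [|j]; first by exists 0%N; rewrite //= fx.
by move=> /IHs[i lt_i fiE]; exists i.+1.
Qed.

Lemma nth_pmap_index2 T U (f : T -> option U) x0 y0 (s : seq T) j j' :
  (j < j' < size (pmap f s))%N ->
  exists i i', [/\ (i < i' < size s)%N,
     f (nth x0 s i) = Some (nth y0 (pmap f s) j) &
     f (nth x0 s i') = Some (nth y0 (pmap f s) j')].
Proof.
elim: s j j' => [|x s IHs] j j' /=; first by rewrite andbF.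
case fx: (f x) => [y|] /=; last first.
  by move=> /IHs[i [i' [lt_ii' fiE fi'E]]]; exists i.+1, i'.+1.
case: j j' => [|j] [|j'] //=.
  by move=> /(nth_pmap_index x0 y0)[i' lt_i' fi'E]; exists 0%N, i'.+1; rewrite /= ?fx.
by move=> /IHs[i [i' [lt_ii' fiE fi'E]]]; exists i.+1, i'.+1.
Qed.

Lemma F2_cases (a : 'F_2) : a = 0 \/ a = 1.
Proof. by case: a => -[|[|m]] // lt_m; [left|right]; apply: val_inj. Qed.

Lemma F2_addrr (a : 'F_2) : a + a = 0.
Proof. exact: addrr_pchar2 (pchar_Fp (isT : prime 2)) a. Qed.

Lemma F2mx_addrr m k (A : 'M['F_2]_(m, k)) : A + A = 0.
Proof. by apply/matrixP => i j; rewrite !mxE F2_addrr. Qed.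

Lemma F2D_neq0 (a b : 'F_2) : (a + b != 0) = (a != 0) (+) (b != 0).
Proof. by case: (F2_cases a) => ->; case: (F2_cases b) => ->. Qed.

Lemma F2M_neq0 (a b : 'F_2) : (a * b != 0) = (a != 0) && (b != 0).
Proof. by case: (F2_cases a) => ->; case: (F2_cases b) => ->. Qed.

Section DotF2.
Variable m : nat.
Implicit Types u a b : 'rV['F_2]_m.

Lemma dotF2Dr u a b : dotF2 u (a + b) = dotF2 u a + dotF2 u b.
Proof. by rewrite /dotF2 -big_split; apply: eq_bigr => j _; rewrite mxE mulrDr. Qed.

Lemma dotF2_delta a k : dotF2 (delta_mx 0 k) a = a 0 k.
Proof.
rewrite /dotF2 (bigD1 k) //= big1 ?addr0 => [|i ne_ik]; first by rewrite mxE !eqxx mul1r.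
by rewrite mxE (negbTE ne_ik) andbF mul0r.
Qed.

Lemma dotF2_nondeg a b : (forall u, dotF2 u a = dotF2 u b) -> a = b.
Proof. by move=> dotE; apply/rowP => k; rewrite -!dotF2_delta dotE. Qed.

End DotF2.

(** * Pauli matrices *)

Lemma kbit0 k : kbit k 0 = odd k.
Proof. by rewrite /kbit expn0 divn1. Qed.

Lemma kbitS k j : kbit k j.+1 = kbit (k %/ 2) j.
Proof. by rewrite /kbit expnS divnMA. Qed.

Lemma kbit_exists_nat n (f : nat -> bool) :
  exists2 k, (k < 2 ^ n)%N & forall j, (j < n)%N -> kbit k j = f j.
Proof.
elim: n => [|n [k lt_k kbitE]]; first by exists 0%N.
exists (k + f n * 2 ^ n)%N; first by rewrite expnS; case: (f n) => /=; lia.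
move=> j; rewrite ltnS leq_eqVlt => /orP[/eqP->|lt_jn].
  rewrite /kbit divnDr ?dvdn_mull // divn_small // add0n mulnK ?expn_gt0 //.
  by case: (f n).
rewrite /kbit -(subnK (ltnW lt_jn)) expnD mulnA divnDMl ?expn_gt0 // oddD.
rewrite -/(kbit k j) kbitE // oddM oddX.
have -> : (n - j == 0)%N = false by apply/negbTE; rewrite subn_eq0 -ltnNge.
by rewrite andbF addbF.
Qed.

Lemma kbit_inj_nat n k k' : (k < 2 ^ n)%N -> (k' < 2 ^ n)%N ->
  (forall j, (j < n)%N -> kbit k j = kbit k' j) -> k = k'.
Proof.
elim: n k k' => [|n IHn] k k'; first by rewrite expn0 !ltnS !leqn0 => /eqP-> /eqP->.
move=> lt_k lt_k' kbitE.
have half_eq : (k %/ 2 = k' %/ 2)%N.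
  by apply: IHn; rewrite ?ltn_divLR -?expnSr // => j lt_jn; rewrite -!kbitS kbitE.
have odd_eq : odd k = odd k' by rewrite -!kbit0 kbitE.
by rewrite (divn_eq k 2) (divn_eq k' 2) half_eq !modn2 odd_eq.
Qed.

Lemma kbit_exists n (f : 'I_n -> bool) :
  exists k : 'I_(2 ^ n), forall j : 'I_n, kbit k j = f j.
Proof.
have [k lt_k kbitE] := kbit_exists_nat n (fun j => if insub j is Some j' then f j' else false).
by exists (Ordinal lt_k) => j /=; rewrite kbitE // valK.
Qed.

Lemma kbit_inj n (k k' : 'I_(2 ^ n)) : (forall j : 'I_n, kbit k j = kbit k' j) -> k = k'.
Proof.
move=> kbitE; apply/val_inj/(kbit_inj_nat (ltn_ord k) (ltn_ord k')) => j lt_jn.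
exact: (kbitE (Ordinal lt_jn)).
Qed.

Lemma xbitD n (p q : pauli n) j : xbit (p + q) j = xbit p j (+) xbit q j.
Proof. by rewrite /xbit mxE F2D_neq0. Qed.

Lemma zbitD n (p q : pauli n) j : zbit (p + q) j = zbit p j (+) zbit q j.
Proof. by rewrite /zbit mxE F2D_neq0. Qed.

Definition sgF (a : 'F_2) : algC := sgnC (a != 0).

Lemma sgnC_neq0 b : sgnC b != 0.
Proof. by case: b; rewrite /sgnC ?oppr_eq0 oner_eq0. Qed.

Lemma sgFD a b : sgF (a + b) = sgF a * sgF b.
Proof. by rewrite /sgF F2D_neq0; case: (a != 0); case: (b != 0); rewrite /sgnC /=; ring. Qed.

Lemma sgF_sum n (F : 'I_n -> 'F_2) : sgF (\sum_j F j) = \prod_j sgF (F j).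
Proof. by apply: (big_morph sgF sgFD); rewrite /sgF eqxx. Qed.

Lemma sgnC_inj : injective sgnC.
Proof.
have N1_neq1 : (-1 : algC) == 1 = false.
  by apply/negbTE; rewrite -subr_eq0 -opprD oppr_eq0 (pnatr_eq0 algC 2).
by case; case => // /eqP; rewrite /sgnC ?N1_neq1 // eq_sym N1_neq1.
Qed.

Lemma sgF_inj : injective sgF.
Proof.
by move=> a b /sgnC_inj; case: (F2_cases a) => ->; case: (F2_cases b) => ->.
Qed.

Lemma sgF_symp n (p q : pauli n) : sgF (symp p q) =
  \prod_(j < n) (sgnC (xbit p j && zbit q j) * sgnC (zbit p j && xbit q j)).
Proof. by rewrite sgF_sum; apply: eq_bigr => j _; rewrite sgFD /sgF !F2M_neq0. Qed.

Definition pphase n (p : pauli n) : algC :=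
  'i ^+ #|[set j : 'I_n | xbit p j && zbit p j]|.

Lemma pphase_neq0 n (p : pauli n) : pphase p != 0.
Proof. by rewrite /pphase expf_neq0 // neq0Ci. Qed.

Lemma prod_sgnC n (P : pred 'I_n) :
  \prod_(j < n) sgnC (P j) = (-1) ^+ #|[set j : 'I_n | P j]| :> algC.
Proof. by rewrite -big_mkcond /= prodr_const cardsE. Qed.

Lemma pmxE n (p : pauli n) r c : pmx p r c =
  if [forall j : 'I_n, kbit r j == kbit c j (+) xbit p j]
  then pphase p * \prod_(j < n) sgnC (zbit p j && kbit c j) else 0.
Proof. by rewrite mxE prod_sgnC. Qed.

Lemma pmx_mulmxE n (p q : pauli n) r c : (pmx p *m pmx q) r c =
  if [forall j : 'I_n, kbit r j == kbit c j (+) xbit q j (+) xbit p j]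
  then pphase p * pphase q * \prod_(j < n)
     (sgnC (zbit p j && (kbit c j (+) xbit q j)) * sgnC (zbit q j && kbit c j))
  else 0.
Proof.
have [k0 k0E] := kbit_exists (fun j => kbit c j (+) xbit q j).
rewrite mxE (bigD1 k0) //= big1 ?addr0; last first.
  move=> k ne_k; rewrite (pmxE q); case: ifP; last by rewrite mulr0.
  move/forallP => kE; case/eqP: ne_k; apply: kbit_inj => j.
  by rewrite k0E; apply/eqP.
rewrite !pmxE.
have -> : [forall j : 'I_n, kbit k0 j == kbit c j (+) xbit q j].
  by apply/forallP => j; rewrite k0E.
have -> : [forall j : 'I_n, kbit r j == kbit k0 j (+) xbit p j] =
          [forall j : 'I_n, kbit r j == kbit c j (+) xbit q j (+) xbit p j].
  by apply: eq_forallb => j; rewrite k0E.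
case: ifP => _; last by rewrite mul0r.
rewrite big_split /=; under eq_bigr => j _ do rewrite k0E.
by rewrite -!mulrA; congr (_ * _); rewrite mulrCA.
Qed.

Lemma pmx_comm n (p q : pauli n) :
  pmx p *m pmx q = sgF (symp p q) *: (pmx q *m pmx p).
Proof.
apply/matrixP => r c; rewrite pmx_mulmxE mxE pmx_mulmxE.
have -> : [forall j : 'I_n, kbit r j == kbit c j (+) xbit p j (+) xbit q j] =
          [forall j : 'I_n, kbit r j == kbit c j (+) xbit q j (+) xbit p j].
  by apply: eq_forallb => j; rewrite addbAC.
case: ifP => _; last by rewrite mulr0.
rewrite sgF_symp [pphase q * _]mulrC mulrCA -!mulrA; congr (_ * (_ * _)).
rewrite -big_split; apply: eq_bigr => j _ /=.
by case: (zbit p j); case: (xbit q j); case: (zbit q j); case: (xbit p j);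
  case: (kbit c j); rewrite /sgnC /=; ring.
Qed.

Lemma pmx_sqr n (p : pauli n) : pmx p *m pmx p = 1.
Proof.
apply/matrixP => r c; rewrite pmx_mulmxE mxE.
have -> : [forall j : 'I_n, kbit r j == kbit c j (+) xbit p j (+) xbit p j] = (r == c).
  apply/forallP/eqP => [rE|->] ; last by move=> j; rewrite -addbA addbb addbF.
  by apply: kbit_inj => j; move/eqP: (rE j) ->; rewrite -addbA addbb addbF.
case: eqP => _ //.
have -> : \prod_(j < n) (sgnC (zbit p j && (kbit c j (+) xbit p j)) *
                        sgnC (zbit p j && kbit c j))
        = \prod_(j < n) sgnC (xbit p j && zbit p j).
  apply: eq_bigr => j _.
  by case: (zbit p j); case: (xbit p j); case: (kbit c j); rewrite /sgnC /=; ring.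
by rewrite prod_sgnC /pphase -exprMn -expr2 sqrCi -exprMn
  mulrNN mulr1 expr1n.
Qed.

Lemma pmx_unit n (p : pauli n) : pmx p \in unitmx.
Proof. by case: (mulmx1_unit (pmx_sqr p)). Qed.

Lemma pmx_mulmx n (p q : pauli n) :
  exists2 c, c != 0 & pmx p *m pmx q = c *: pmx (p + q).
Proof.
set s := \prod_(j < n) sgnC (zbit p j && xbit q j).
have s_neq0 : s != 0 by rewrite prodf_seq_neq0; apply/allP => j _; rewrite sgnC_neq0.
exists (pphase p * pphase q * s / pphase (p + q)).
  by rewrite !mulf_neq0 ?invr_eq0 ?pphase_neq0.
apply/matrixP => r c; rewrite pmx_mulmxE mxE pmxE.
have -> : [forall j : 'I_n, kbit r j == kbit c j (+) xbit (p + q) j] =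
          [forall j : 'I_n, kbit r j == kbit c j (+) xbit q j (+) xbit p j].
  by apply: eq_forallb => j; rewrite xbitD -addbA [xbit p j (+) _]addbC.
case: ifP => _; last by rewrite mulr0.
rewrite [RHS]mulrA divfK ?pphase_neq0 // -!mulrA; congr (_ * (_ * _)).
rewrite /s -big_split; apply: eq_bigr => j _ /=; rewrite zbitD.
by case: (zbit p j); case: (xbit q j); case: (zbit q j); case: (kbit c j);
  rewrite /sgnC /=; ring.
Qed.

Section Symplectic.
Variable n : nat.
Implicit Types p q r : pauli n.

Lemma sympDl p q r : symp (p + q) r = symp p r + symp q r.
Proof. by rewrite /symp -big_split; apply: eq_bigr => j _ /=; rewrite !mxE; ring. Qed.

Lemma sympDr p q r : symp r (p + q) = symp r p + symp r q.
Proof. by rewrite /symp -big_split; apply: eq_bigr => j _ /=; rewrite !mxE; ring. Qed.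

Lemma sympZl a p r : symp (a *: p) r = a * symp p r.
Proof. by rewrite /symp mulr_sumr; apply: eq_bigr => j _ /=; rewrite !mxE; ring. Qed.

Lemma sympZr a p r : symp r (a *: p) = a * symp r p.
Proof. by rewrite /symp mulr_sumr; apply: eq_bigr => j _ /=; rewrite !mxE; ring. Qed.

Lemma symp0l r : symp 0 r = 0.
Proof. by rewrite /symp big1 // => j _; rewrite !mxE !mul0r addr0. Qed.

Lemma symp0r r : symp r 0 = 0.
Proof. by rewrite /symp big1 // => j _; rewrite !mxE !mulr0 addr0. Qed.

Lemma symp_sumr p I (s : seq I) (P : pred I) (F : I -> pauli n) :
  symp p (\sum_(i <- s | P i) F i) = \sum_(i <- s | P i) symp p (F i).
Proof.
apply: (big_rec2 (fun A b => symp p A = b)); first exact: symp0r.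
by move=> i A b _ <-; rewrite sympDr.
Qed.

Lemma lshift_neq_rshift (i j : 'I_n) : (lshift n i == rshift n j) = false.
Proof. by apply/negbTE/eqP => /(congr1 val) /=; have := ltn_ord i; lia. Qed.

Lemma symp_delta_rshift p j : symp p (delta_mx 0 (rshift n j)) = p 0 (lshift n j).
Proof.
rewrite /symp (bigD1 j) //= big1 ?addr0 => [|i ne_ij].
  by rewrite !mxE !eqxx lshift_neq_rshift mulr0 addr0 mulr1.
rewrite !mxE lshift_neq_rshift (inj_eq (@rshift_inj _ _)) (negbTE ne_ij).
by rewrite !mulr0 addr0.
Qed.

Lemma symp_delta_lshift p j : symp p (delta_mx 0 (lshift n j)) = p 0 (rshift n j).
Proof.
rewrite /symp (bigD1 j) //= big1 ?addr0 => [|i ne_ij].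
  by rewrite !mxE !eqxx eq_sym lshift_neq_rshift mulr0 add0r mulr1.
rewrite !mxE eq_sym lshift_neq_rshift (inj_eq (@lshift_inj _ _)) (negbTE ne_ij).
by rewrite !mulr0 addr0.
Qed.

Lemma symp_nondeg p q : (forall r, symp p r = symp q r) -> p = q.
Proof.
move=> sympE; apply/rowP => k; case: (splitP k) => j kE.
- have -> : k = lshift n j by apply: val_inj.
  by rewrite -!symp_delta_rshift.
- have -> : k = rshift n j by apply: val_inj.
  by rewrite -!symp_delta_lshift.
Qed.

Lemma symp_disjoint p q : [disjoint psupp p & psupp q] -> symp p q = 0.
Proof.
move=> pq_disj; rewrite /symp big1 // => j _.
have [pj | /negbTE pj] := boolP (j \in psupp p).
  move: (disjointFr pq_disj pj); rewrite inE /xbit /zbit.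
  by move/negbT; rewrite negb_or !negbK => /andP[/eqP-> /eqP->]; rewrite !mulr0 addr0.
move: pj; rewrite inE /xbit /zbit => /negbT; rewrite negb_or !negbK.
by move=> /andP[/eqP-> /eqP->]; rewrite !mul0r addr0.
Qed.

End Symplectic.

(** * Clifford conjugation *)

Section Clifford.
Variable n : nat.
Implicit Types (p q r s : pauli n) (U A B : 'M[algC]_(2 ^ n)).

Lemma unitmx_pow2_neq0 U : U \in unitmx -> U != 0.
Proof. by apply: unitmx_neq0; rewrite expn_gt0. Qed.

Definition clifford_mx U :=
  U \in unitmx /\ forall p, exists q a, U *m pmx p = a *: (pmx q *m U).

Lemma intertwineM U A A' B B' a b :
  U *m A = a *: (A' *m U) -> U *m B = b *: (B' *m U) ->
  U *m (A *m B) = (a * b) *: (A' *m B' *m U).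
Proof.
move=> EA EB.
by rewrite mulmxA EA -scalemxAl -mulmxA EB -scalemxAr scalerA mulmxA.
Qed.

Lemma intertwineV U A B a : U \in unitmx -> a != 0 ->
  U *m A = a *: (B *m U) -> invmx U *m B = a^-1 *: (A *m invmx U).
Proof.
move=> Uu a_neq0 E.
have -> : A *m invmx U = a *: (invmx U *m B).
  by rewrite -[A](mulKmx Uu) E -scalemxAr -scalemxAl !mulmxA mulmxK.
by rewrite scalerA mulVf // scale1r.
Qed.

Lemma clifford_mx1 : clifford_mx 1%:M.
Proof. by split=> [|p]; [exact: unitmx1 | exists p, 1; rewrite mul1mx mulmx1 scale1r]. Qed.

Lemma clifford_mxM U V : clifford_mx U -> clifford_mx V -> clifford_mx (U *m V).
Proof.
move=> [Uu cliffU] [Vu cliffV]; split=> [|p]; first by rewrite unitmx_mul Uu Vu.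
have [q [b Eq]] := cliffV p; have [r [a Er]] := cliffU q.
exists r, (a * b).
by rewrite -mulmxA Eq -scalemxAr !mulmxA Er -scalemxAl scalerA [b * a]mulrC.
Qed.

Lemma clifford_gate_mx (A : {set 'I_n}) U : clifford_gate A U -> clifford_mx U.
Proof.
case=> /mulmx1_unit[Uu _] cliffU _; split => // p.
have [q /eqP propE] := cliffU p.
exists q, (\tr (pmx q *m (U *m pmx p *m invmx U)) / (2 ^ n)%:R).
by rewrite scalemxAl -propE mulmxKV.
Qed.

Lemma proportional_pmx a q : proportional (a *: pmx q) (pmx q).
Proof.
rewrite /proportional -scalemxAr pmx_sqr mxtraceZ mxtrace1 mulfK //.
by rewrite pnatr_eq0 expn_eq0.
Qed.

Lemma conjP_spec U p : clifford_mx U ->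
  exists2 a, a != 0 & U *m pmx p = a *: (pmx (conjP U p) *m U).
Proof.
case=> Uu cliffU; rewrite /conjP; case: pickP => [q /eqP propE | noq] /=.
  set a := (X in X *: pmx q) in propE.
  have E : U *m pmx p = a *: (pmx q *m U) by rewrite scalemxAl -propE mulmxKV.
  exists a => //; apply/eqP => a0.
  have /unitmx_pow2_neq0 : U *m pmx p \in unitmx by rewrite unitmx_mul Uu pmx_unit.
  by rewrite E a0 scale0r eqxx.
have [q [a E]] := cliffU p.
by move: (noq q); rewrite E -scalemxAl mulmxK // proportional_pmx.
Qed.

(* Conjugation preserves commutation signs, hence the symplectic form. *)
Lemma conj_pmx_symp U p q r s a b : U \in unitmx -> a != 0 -> b != 0 ->
  U *m pmx p = a *: (pmx q *m U) -> U *m pmx r = b *: (pmx s *m U) ->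
  symp q s = symp p r.
Proof.
move=> Uu a_neq0 b_neq0 Ep Er.
have SQU_neq0 : pmx s *m pmx q *m U != 0.
  by rewrite unitmx_pow2_neq0 // !unitmx_mul !pmx_unit.
have := intertwineM Ep Er.
rewrite (pmx_comm p r) (pmx_comm q s) -scalemxAr (intertwineM Er Ep) -scalemxAl.
rewrite !scalerA => /(scalemxI SQU_neq0) signE.
apply: sgF_inj; apply: (mulfI (mulf_neq0 a_neq0 b_neq0)).
by rewrite -signE; ring.
Qed.

Lemma pmx_scale_inj p q c d : c != 0 -> d != 0 -> c *: pmx p = d *: pmx q -> p = q.
Proof.
move=> c_neq0 d_neq0 E; apply: symp_nondeg => s; apply/esym.
have Ep : 1%:M *m pmx p = (c^-1 * d) *: (pmx q *m 1%:M).
  by rewrite mul1mx mulmx1 -scalerA -E scalerA mulVf // scale1r.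
have Es : 1%:M *m pmx s = 1 *: (pmx s *m 1%:M) by rewrite mul1mx mulmx1 scale1r.
by apply: conj_pmx_symp Ep Es; rewrite ?unitmx1 ?oner_neq0 ?mulf_neq0 ?invr_eq0.
Qed.

Lemma conjP_inj U : clifford_mx U -> injective (conjP U).
Proof.
move=> cliffU p p' E; apply: symp_nondeg => s; have Uu := cliffU.1.
have [a a_neq0 Ep] := conjP_spec p cliffU.
have [a' a'_neq0 Ep'] := conjP_spec p' cliffU.
have [c c_neq0 Es] := conjP_spec s cliffU.
by rewrite -(conj_pmx_symp Uu a_neq0 c_neq0 Ep Es) -(conj_pmx_symp Uu a'_neq0 c_neq0 Ep' Es) E.
Qed.

Lemma clifford_mxV U : clifford_mx U -> clifford_mx (invmx U).
Proof.
move=> cliffU; have Uu := cliffU.1; split=> [|r]; first by rewrite unitmx_inv.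
have [g _ conjPK] := injF_bij (conjP_inj cliffU).
have [a a_neq0] := conjP_spec (g r) cliffU; rewrite conjPK => Er.
by exists (g r), a^-1; apply: intertwineV.
Qed.

Lemma conjP_symp U p r : clifford_mx U ->
  symp (conjP U p) r = symp p (conjP (invmx U) r).
Proof.
move=> cliffU; have Uu := cliffU.1.
have [a a_neq0 Ep] := conjP_spec p cliffU.
have [b b_neq0 Er] := conjP_spec r (clifford_mxV cliffU).
have Uiu : invmx U \in unitmx by rewrite unitmx_inv.
have := intertwineV Uiu b_neq0 Er; rewrite invmxK => Er'.
by apply: conj_pmx_symp Ep Er'; rewrite ?invr_eq0.
Qed.

Lemma conjP_add U p q : clifford_mx U ->
  conjP U (p + q) = conjP U p + conjP U q.
Proof.
move=> cliffU; have Uu := cliffU.1.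
have [a a_neq0 Ep] := conjP_spec p cliffU; have [b b_neq0 Eq] := conjP_spec q cliffU.
have [d d_neq0 Epq] := conjP_spec (p + q) cliffU.
have [c c_neq0 pqE] := pmx_mulmx p q.
have [c' c'_neq0 pqE'] := pmx_mulmx (conjP U p) (conjP U q).
have := intertwineM Ep Eq; rewrite pqE pqE' -scalemxAr Epq -scalemxAl !scalerA.
move=> /(congr1 (mulmx^~ (invmx U))); rewrite -!scalemxAl !mulmxK //.
by apply: pmx_scale_inj; rewrite !mulf_neq0.
Qed.

Lemma conjP_linear U : clifford_mx U -> linear (conjP U).
Proof.
move=> cliffU a p q.
by case: (F2_cases a) => ->; rewrite ?scale0r ?add0r ?scale1r ?conjP_add.
Qed.

End Clifford.

Lemma Ulev_clifford n (C : circuit n) l : wf_circuit C -> clifford_mx (Ulev C l).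
Proof.
case=> _ _ _ cliff_gates; rewrite /Ulev.
have : clifford_mx (1 : 'M_(2 ^ n)) by exact: clifford_mx1.
elim: C cliff_gates (1 : 'M_(2 ^ n)) => [|[l' o] C IHC] //= cliff_gates M cliffM.
apply: IHC => [i A U lt_i|]; first exact: (cliff_gates i.+1).
case: o cliff_gates => // A U cliff_gates; case: eqP => // _.
by apply: clifford_mxM => //; apply: (@clifford_gate_mx _ A); apply: (cliff_gates 0%N).
Qed.

(** * Back- and forward cumulants *)

Section Spacetime.
Variables (n : nat) (C : circuit n).
Hypothesis wfC : wf_circuit C.
Local Notation D := (depth C).
Implicit Types (X Y Z F G : stop C) (P : pauli n).

Definition stcomp X k : pauli n := row (inord k) X.

Lemma st_sympDl X Y Z : st_symp (X + Y) Z = st_symp X Z + st_symp Y Z.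
Proof. by rewrite /st_symp -big_split; apply: eq_bigr => k _; rewrite linearD sympDl. Qed.

Lemma st_sympZl a X Z : st_symp (a *: X) Z = a * st_symp X Z.
Proof. by rewrite /st_symp mulr_sumr; apply: eq_bigr => k _; rewrite linearZ sympZl. Qed.

Lemma st_symp0l Z : st_symp 0 Z = 0.
Proof. by rewrite /st_symp big1 // => k _; rewrite linear0 symp0l. Qed.

Lemma st_symp_suml I (s : seq I) (Q : pred I) (E : I -> stop C) Z :
  st_symp (\sum_(i <- s | Q i) E i) Z = \sum_(i <- s | Q i) st_symp (E i) Z.
Proof.
apply: (big_rec2 (fun A b => st_symp A Z = b)); first exact: st_symp0l.
by move=> i A b _ <-; rewrite st_sympDl.
Qed.

Lemma row_etaST k P (i : 'I_D.+1) :
  row i (etaST C k P) = if i == k :> nat then P else 0.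
Proof. by rewrite rowK. Qed.

Lemma etaST_linear k : linear (etaST C k).
Proof.
move=> a P Q; apply/matrixP => i j; rewrite !mxE.
by case: ifP; rewrite !mxE ?mulr0 ?addr0.
Qed.

Lemma st_symp_etaST k P Y : (k <= D)%N -> st_symp (etaST C k P) Y = symp P (stcomp Y k).
Proof.
move=> le_kD; rewrite /st_symp (bigD1 (inord k)) //= big1 ?addr0 => [|i ne_ik].
  by rewrite row_etaST inordK ?eqxx.
rewrite row_etaST; case: eqP => [ik|_]; last by rewrite symp0l.
by case/eqP: ne_ik; apply: val_inj; rewrite /= inordK.
Qed.

Lemma Gop_linear l : linear (Gop C ^~ l).
Proof.
move=> a P Q; rewrite /Gop (conjP_linear (Ulev_clifford l wfC)) !etaST_linear.
by rewrite scalerDr addrACA.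
Qed.

Lemma stcomp_back_step l G k : (k <= D)%N ->
  stcomp (back_step l G) k =
  if k == l.-1 then stcomp G k + conjP (invmx (Ulev C l)) (stcomp G l) else stcomp G k.
Proof. by move=> le_kD; rewrite /stcomp rowK inordK. Qed.

Lemma stcomp_foldl_back_step a b F k : (k <= D)%N -> (0 < a)%N ->
  (k.+1 < a)%N || (a + b <= k.+1)%N ->
  stcomp (foldl (fun G l => back_step l G) F (rev (iota a b))) k = stcomp F k.
Proof.
move=> le_kD a_gt0 k_out.
have : all (fun l => l.-1 != k) (rev (iota a b)).
  by apply/allP => l; rewrite mem_rev mem_iota => l_ab; apply/eqP; lia.
elim: (rev _) F => [|l s IHs] F //= /andP[ne_lk s_k].
by rewrite IHs // stcomp_back_step // eq_sym (negbTE ne_lk).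
Qed.

Lemma backcum_top F : stcomp (backcum F) D = stcomp F D.
Proof. by apply: stcomp_foldl_back_step; rewrite // add1n leqnn orbT. Qed.

Lemma backcum_rec F k : (k < D)%N ->
  stcomp (backcum F) k =
  stcomp F k + conjP (invmx (Ulev C k.+1)) (stcomp (backcum F) k.+1).
Proof.
move=> lt_kD; rewrite /backcum.
have -> : iota 1 D = iota 1 k ++ k.+1 :: iota k.+2 (D - k.+1).
  by rewrite {1}(_ : D = k + (D - k.+1).+1)%N ?iotaD ?add1n //; lia.
rewrite rev_pivot foldl_cat /=; set G := foldl _ F _.
have lowE j : (k <= j <= k.+1)%N ->
    stcomp (foldl (fun G l => back_step l G) (back_step k.+1 G) (rev (iota 1 k))) j
    = stcomp (back_step k.+1 G) j.
  by move=> lev_j; apply: stcomp_foldl_back_step => //; lia.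
rewrite !lowE ?leqnn ?leqnSn // !stcomp_back_step //; last lia.
rewrite eqxx (_ : (k.+1 == k) = false) ?eqn_leq ?ltnn //.
by rewrite /G stcomp_foldl_back_step //; lia.
Qed.

Lemma st_symp_Gop_backcum P l F : (1 <= l <= D)%N ->
  st_symp (Gop C P l) (backcum F) = symp P (stcomp F l.-1).
Proof.
move=> /andP[l_gt0 le_lD]; rewrite /Gop st_sympDl !st_symp_etaST //; last lia.
rewrite backcum_rec; last lia.
rewrite prednK // sympDr conjP_symp; last exact: Ulev_clifford.
by rewrite -addrA F2_addrr addr0.
Qed.

Lemma st_symp_top_backcum P F :
  st_symp (etaST C D P) (backcum F) = symp P (stcomp F D).
Proof. by rewrite st_symp_etaST // backcum_top. Qed.

End Spacetime.

Section ForwardCumulant.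
Variables (n : nat) (C : circuit n).
Hypothesis wfC : wf_circuit C.
Local Notation D := (depth C).
Implicit Types (X F : stop C) (P : pauli n).

Fixpoint fwdcum X k : pauli n :=
  if k is k'.+1 then stcomp X k + conjP (Ulev C k) (fwdcum X k') else stcomp X 0.

(* What is left of [X] after peeling off [G(fwdcum X l, l+1)] for [l < m]. *)
Definition fwd_rest X m : stop C :=
  \matrix_(k < D.+1) (if (k < m)%N then 0 else if k == m :> nat then fwdcum X m else row k X).

Lemma row_Gop P l (i : 'I_D.+1) : row i (Gop C P l) =
  (if i == l.-1 :> nat then P else 0) + (if i == l :> nat then conjP (Ulev C l) P else 0).
Proof. by rewrite /Gop linearD /= !row_etaST. Qed.

Lemma fwd_rest0 X : fwd_rest X 0 = X.
Proof.
apply/row_matrixP => i; rewrite rowK /=; case: eqP => // i0.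
by rewrite /stcomp; congr row; apply: val_inj; rewrite /= i0 inordK.
Qed.

Lemma fwd_rest_step X m : (m < D)%N ->
  fwd_rest X m = Gop C (fwdcum X m) m.+1 + fwd_rest X m.+1.
Proof.
move=> lt_mD; apply/row_matrixP => i; rewrite linearD /= row_Gop !rowK /=.
have [lt_im|le_mi] := ltnP i m.
  by rewrite ltnS ltnW // !ifN_eq ?addr0 //; apply/eqP; lia.
case: (eqVneq (i : nat) m) => [->|ne_im]; first by rewrite ltnSn ifN_eq ?addr0 //; lia.
rewrite ltnS leq_eqVlt (negbTE ne_im) ltnNge le_mi add0r /=.
case: (eqVneq (i : nat) m.+1) => [iE|_]; last by rewrite add0r.
rewrite addrCA F2mx_addrr addr0 /stcomp; congr row.
by apply: val_inj; rewrite /= inordK -iE.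
Qed.

Lemma fwd_restD X : fwd_rest X D = etaST C D (fwdcum X D).
Proof.
apply/row_matrixP => i; rewrite rowK row_etaST.
have [lt_iD|le_Di] := ltnP i D; first by rewrite ltn_eqF.
by rewrite eqn_leq le_Di andbT -ltnS ltn_ord.
Qed.

Lemma fwdcum_decomp X :
  X = \sum_(l < D) Gop C (fwdcum X l) l.+1 + etaST C D (fwdcum X D).
Proof.
suff decomp m : (m <= D)%N -> X = \sum_(l < m) Gop C (fwdcum X l) l.+1 + fwd_rest X m.
  by rewrite -fwd_restD; apply: decomp.
elim: m => [|m IHm] le_mD; first by rewrite big_ord0 add0r fwd_rest0.
by rewrite big_ord_recr /= -addrA -fwd_rest_step // -IHm // ltnW.
Qed.

Lemma st_symp_backcum X F :
  st_symp X (backcum F) = \sum_(l < D.+1) symp (fwdcum X l) (stcomp F l).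
Proof.
rewrite {1}(fwdcum_decomp X) st_sympDl st_symp_suml st_symp_top_backcum big_ord_recr /=.
congr (_ + _); apply: eq_bigr => l _.
by rewrite st_symp_Gop_backcum //; have := ltn_ord l; lia.
Qed.

End ForwardCumulant.

(** * Measurements *)

Section Measurements.
Variables (n : nat) (C : circuit n).
Hypothesis wfC : wf_circuit C.

Definition meas_entry (o : nat * op n) : option (nat * bool * pauli n) :=
  if o.2 is Meas s p then Some (o.1, s, p) else None.

Lemma meas_entry_nth_op i (j : 'I_(nmeas C)) :
  meas_entry (nth_op C i) = Some (nth (0%N, false, 0) (meas_of C) j) ->
  nth_op C i = (mlev j, Meas (msgn j) (mpauli j)).
Proof. by rewrite /mlev /msgn /mpauli; case: (nth_op C i) => l [] // s p [<-]. Qed.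

Lemma meas_index (j : 'I_(nmeas C)) :
  exists2 i, (i < size C)%N & nth_op C i = (mlev j, Meas (msgn j) (mpauli j)).
Proof.
have [i lt_i /meas_entry_nth_op measE] :=
  @nth_pmap_index _ _ meas_entry (0%N, Meas false 0) (0%N, false, 0) C j (ltn_ord j).
by exists i.
Qed.

Lemma meas_index2 (j k : 'I_(nmeas C)) : (j < k)%N ->
  exists i i', [/\ (i < i' < size C)%N,
     nth_op C i = (mlev j, Meas (msgn j) (mpauli j)) &
     nth_op C i' = (mlev k, Meas (msgn k) (mpauli k))].
Proof.
move=> lt_jk; have [i [i' [lt_ii' /meas_entry_nth_op jE /meas_entry_nth_op kE]]] :=
  @nth_pmap_index2 _ _ meas_entry (0%N, Meas false 0) (0%N, false, 0) C j k
    (introT andP (conj lt_jk (ltn_ord k))).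
by exists i, i'.
Qed.

Lemma nth_op_le_depth i : (i < size C)%N -> ((nth_op C i).1 <= depth C)%N.
Proof.
move=> lt_i; rewrite /depth (big_nth (0%N, Meas false 0)).
by apply: (leq_bigmax_seq (F := fun k => (nth_op C k).1)); rewrite ?mem_index_iota.
Qed.

Lemma mlev_bounds (j : 'I_(nmeas C)) : (0 < mlev j <= depth C)%N.
Proof.
have [i lt_i measE] := meas_index j; case: wfC => lev_gt0 _ _ _.
have := lev_gt0 i lt_i; rewrite measE /= => -> /=.
by have := nth_op_le_depth lt_i; rewrite measE.
Qed.

Lemma mlev_disjoint (j k : 'I_(nmeas C)) : j != k -> mlev j = mlev k ->
  [disjoint psupp (mpauli j) & psupp (mpauli k)].
Proof.
wlog lt_jk : j k / (j < k)%N.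
  move=> W ne_jk lev_jk; case: (ltngtP j k) => [lt_jk|lt_kj|/val_inj jk].
  - exact: W.
  - by rewrite disjoint_sym; apply: W lt_kj _ (esym lev_jk); rewrite eq_sym.
  - by rewrite jk eqxx in ne_jk.
move=> _ lev_jk; have [i [i' [lt_ii' jE kE]]] := meas_index2 lt_jk.
by case: wfC => _ _ disj _; move: (disj i i' lt_ii'); rewrite jE kE; apply.
Qed.

End Measurements.

Section Pairing.
Variables (n : nat) (C : circuit n).
Hypothesis wfC : wf_circuit C.
Local Notation D := (depth C).
Implicit Types (X Y : stop C) (u v : 'rV['F_2]_(nmeas C)) (P : pauli n).

Lemma stcomp_Fu u k : (k <= D)%N ->
  stcomp (Fu u) k = \sum_j u 0 j *: (if (mlev j).-1 == k then mpauli j else 0).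
Proof.
move=> le_kD; rewrite /stcomp /Fu linear_sum; apply: eq_bigr => j _ /=.
by rewrite linearZ /= row_etaST inordK // eq_sym.
Qed.

Definition flips X : 'rV['F_2]_(nmeas C) :=
  \row_j symp (fwdcum X (mlev j).-1) (mpauli j).

Lemma st_symp_flips X u : st_symp X (backcum (Fu u)) = dotF2 u (flips X).
Proof.
rewrite st_symp_backcum //.
under eq_bigr => l _ do rewrite (stcomp_Fu u (ltn_ord l)) symp_sumr.
rewrite exchange_big /dotF2; apply: eq_bigr => j _; rewrite mxE.
have lt_j : ((mlev j).-1 < D.+1)%N by have := mlev_bounds wfC j; lia.
rewrite (bigD1 (Ordinal lt_j)) //= big1 ?addr0 => [|l ne_lj]; first by rewrite eqxx sympZr.
rewrite sympZr; case: eqP => [lE|]; last by rewrite symp0r mulr0.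
by case/eqP: ne_lj; apply: val_inj; rewrite /= lE.
Qed.

Lemma flipsD X Y : flips (X + Y) = flips X + flips Y.
Proof. by apply: dotF2_nondeg => u; rewrite dotF2Dr -!st_symp_flips st_sympDl. Qed.

Lemma st_symp_top_Fu P u : st_symp (etaST C D P) (backcum (Fu u)) = 0.
Proof.
rewrite st_symp_top_backcum stcomp_Fu // symp_sumr big1 // => j _.
rewrite (_ : (mlev j).-1 == D = false) ?scaler0 ?symp0r //.
by apply/eqP; have := mlev_bounds wfC j; lia.
Qed.

Lemma st_symp_Gop_Fu P l u : (0 < l <= D)%N ->
  st_symp (Gop C P l) (backcum (Fu u)) =
  \sum_j u 0 j * (if mlev j == l then symp P (mpauli j) else 0).
Proof.
move=> lev_l; rewrite st_symp_Gop_backcum // stcomp_Fu; last by lia.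
rewrite symp_sumr; apply: eq_bigr => j _; rewrite sympZr.
have -> : ((mlev j).-1 == l.-1) = (mlev j == l).
  by apply/eqP/eqP; have := mlev_bounds wfC j; lia.
by case: ifP; rewrite ?symp0r.
Qed.

Section Lop.
Variable Pj : 'I_(nmeas C) -> pauli n.
Hypothesis PjP :
  forall j, psupp (Pj j) \subset psupp (mpauli j) /\ symp (Pj j) (mpauli j) = 1.

Lemma Lop_linear : linear (Lop Pj).
Proof.
move=> a v w; rewrite /Lop scaler_sumr -big_split; apply: eq_bigr => j _ /=.
by rewrite !mxE scalerDl scalerA.
Qed.

Lemma st_symp_Lop_Fu u v : st_symp (Lop Pj v) (backcum (Fu u)) = dotF2 u v.
Proof.
rewrite /Lop st_symp_suml /dotF2; apply: eq_bigr => j _.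
rewrite st_sympZl st_symp_Gop_Fu ?mlev_bounds //.
rewrite (bigD1 j) //= eqxx (PjP j).2 mulr1 big1 ?addr0 1?mulrC // => k ne_kj.
case: eqP => [lev_kj|_]; last by rewrite mulr0.
rewrite symp_disjoint ?mulr0 //; apply: disjointWl (PjP j).1 _.
by rewrite disjoint_sym; apply: mlev_disjoint.
Qed.

Lemma flips_Lop v : flips (Lop Pj v) = v.
Proof. by apply: dotF2_nondeg => u; rewrite -st_symp_flips st_symp_Lop_Fu. Qed.

End Lop.
End Pairing.

(** * The spacetime code *)

Section Generators.
Variables (n : nat) (C : circuit n) (Pj : 'I_(nmeas C) -> pauli n).
Variables (b0 : seq (pauli n)) (bl : nat -> seq (pauli n)) (bv : seq 'rV['F_2]_(nmeas C)).
Hypothesis wfC : wf_circuit C.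
Hypothesis PjP :
  forall j, psupp (Pj j) \subset psupp (mpauli j) /\ symp (Pj j) (mpauli j) = 1.
Hypothesis b0_span : <<b0>>%VS = fullv.
Hypothesis blP : forall l, (1 <= l <= depth C)%N ->
  forall P, P \in <<bl l>>%VS <-> comm_level C l P.
Local Notation D := (depth C).
Local Notation gens := ([seq etaST C D P | P <- b0]
  ++ flatten [seq [seq Gop C P l | P <- bl l] | l <- iota 1 D]
  ++ [seq Lop Pj v | v <- bv]).

Lemma memv_gens_eta P : etaST C D P \in <<gens>>%VS.
Proof.
apply: (memv_span_linear (s := b0) (@etaST_linear n C D)); last by rewrite b0_span memvf.
by move=> Q Q_b0; rewrite memv_span // mem_cat map_f.
Qed.

Lemma memv_gens_Gop l P : (1 <= l <= D)%N -> comm_level C l P -> Gop C P l \in <<gens>>%VS.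
Proof.
move=> lev_l /(blP lev_l); apply: (memv_span_linear (s := bl l) (@Gop_linear n C wfC l)).
move=> Q Q_bl; apply: memv_span; rewrite !mem_cat; apply/or3P/Or32/flatten_mapP.
by exists l; [rewrite mem_iota; lia | exact: map_f].
Qed.

Lemma memv_gens_Lop v : v \in <<bv>>%VS -> Lop Pj v \in <<gens>>%VS.
Proof.
apply: (memv_span_linear (s := bv) (@Lop_linear n C Pj)) => w w_bv.
by rewrite memv_span // !mem_cat map_f ?orbT.
Qed.

Lemma flips0_memv_gens X : flips X = 0 -> X \in <<gens>>%VS.
Proof.
move=> flipsX0; rewrite (fwdcum_decomp X); apply: memvD; last exact: memv_gens_eta.
apply: memv_suml => l _; apply: memv_gens_Gop; first by have := ltn_ord l; lia.
by move=> j lev_j; move/rowP/(_ j): flipsX0; rewrite !mxE lev_j.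
Qed.

Lemma st_symp_gens_Fu x u : x \in gens ->
  (forall o, o \in <<bv>>%VS -> dotF2 u o = 0) -> st_symp x (backcum (Fu u)) = 0.
Proof.
move=> x_gens u_perp; move: x_gens; rewrite !mem_cat => /or3P[].
- by move=> /mapP[P _ ->]; rewrite (st_symp_top_Fu wfC).
- move=> /flatten_mapP[l]; rewrite mem_iota => lev_l /mapP[P P_bl ->].
  rewrite (st_symp_Gop_Fu wfC); last by lia.
  rewrite big1 // => j _; case: eqP => [lev_j|_]; last by rewrite mulr0.
  have /(blP _) comm_P : P \in <<bl l>>%VS by exact: memv_span.
  by rewrite comm_P ?mulr0 //; lia.
- by move=> /mapP[v v_bv ->]; rewrite (st_symp_Lop_Fu wfC PjP) u_perp ?memv_span.
Qed.

End Generators.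

Unset Implicit Arguments.
Set Strict Implicit.

Theorem mainTheorem15 (n : nat) (C : circuit n)
  (V : {vspace 'rV['F_2]_(nmeas C)})
  (Pj : 'I_(nmeas C) -> pauli n)
  (b0 : seq (pauli n)) (bl : nat -> seq (pauli n))
  (bv : seq 'rV['F_2]_(nmeas C)) :
  wf_circuit C ->
  (* the outcome code is linear: it is the subspace V *)
  (forall o, o \in V <-> outcome o) ->
  (* the fixed P_j *)
  (forall j, psupp (Pj j) \subset psupp (mpauli j) /\ symp (Pj j) (mpauli j) = 1) ->
  (* bases *)
  basis_of fullv b0 ->
  (forall l, (1 <= l <= depth C)%N ->
     free (bl l) /\ (forall P, P \in <<bl l>>%VS <-> comm_level C l P)) ->
  basis_of V bv ->
  forall X : stop C,
    (forall u : 'rV['F_2]_(nmeas C),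
        (forall o, o \in V -> dotF2 u o = 0) ->
        st_symp X (backcum (Fu u)) = 0)
    <->
    X \in <<[seq etaST C (depth C) P | P <- b0]
           ++ flatten [seq [seq Gop C P l | P <- bl l] | l <- iota 1 (depth C)]
           ++ [seq Lop Pj v | v <- bv]>>%VS.
Proof.
(* Only the linearity of the outcome code matters, not which subspace it is. *)
move=> wfC _ PjP /andP[/eqP b0_span _] blP /andP[/eqP bv_span _] X.
have blP' l lev_l := (blP l lev_l).2.
rewrite -bv_span; split=> [X_comm | X_gens u u_perp].
- have flipsX : flips X \in <<bv>>%VS.
    apply: memv_perp_perp => u u_perp.
    by rewrite -/(dotF2 u _) -(st_symp_flips wfC); apply: X_comm.
  rewrite -[X](addrK (Lop Pj (flips X))); apply: memvB; last exact: memv_gens_Lop.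
  apply: (flips0_memv_gens Pj bv wfC b0_span blP').
  by rewrite (flipsD wfC) (flips_Lop wfC PjP) F2mx_addrr.
- move: X X_gens; apply: span_ind => [|a x y x_gens y_perp]; first exact: st_symp0l.
  by rewrite st_sympDl st_sympZl y_perp (st_symp_gens_Fu wfC PjP blP' x_gens u_perp)
    mulr0 addr0.
Qed.
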